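(* Let $p$ be a positive integer, let $J_1,\dots,J_p\in\mathcal{D}(X)$, and let $\ell_1,\dots,\ell_p$ be positive integers. Define the parallel rollout policy $\tilde\mu$ as follows. For each $x\in X$ and each $i=1,\dots,p$, let $\tilde J_i(x)$ be the optimal value of $$\min_{u_0,\dots,u_{\ell_i-1}}\ \sum_{k=0}^{\ell_i-1}g(x_k,u_k)+J_i(x_{\ell_i})\quad\text{s.t. } x_{k+1}=f(x_k,u_k),\ u_k\in U(x_k),\ k=0,\dots,\ell_i-1,\ x_0=x,$$ (equivalently $\tilde J_i(x)=(T^{\ell_i}J_i)(x)$), and let $(\tilde u_0^i,\dots,\tilde u_{\ell_i-1}^i)$ be a minimizing sequence; choose $\tilde i\in\arg\min_{i=1,\dots,p}\tilde J_i(x)$ and set $\tilde\mu(x)=\tilde u_0^{\tilde i}$. Let $\tilde J(x)=\min_{i=1,\dots,p}\tilde J_i(x)$. Then $J_{\tilde\mu}(x)\le\tilde J(x)$ for all $x\in X$.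
   Context: Setting: $X$ (state space) and $U$ (control space) are sets; for each $x\in X$, $U(x)\subset U$ is nonempty; $f:X\times U\to X$ gives dynamics $x_{k+1}=f(x_k,u_k)$; the stage cost $g$ satisfies $0\le g(x,u)\le\infty$ for all $x\in X$, $u\in U(x)$. A stationary policy is a map $\mu:X\to U$ with $\mu(x)\in U(x)$; its cost function is $J_\mu(x_0)=\sum_{k=0}^\infty g(x_k,\mu(x_k))$ with $x_{k+1}=f(x_k,\mu(x_k))$. $\mathcal{E}^+(X)$ denotes the set of all functions $J:X\to[0,\infty]$. The Bellman operator is $(TJ)(x)=\inf_{u\in U(x)}\{g(x,u)+J(f(x,u))\}$; $T^k$ is its $k$-fold composition. The region of decreasing is $\mathcal{D}(X)=\{J\in\mathcal{E}^+(X): (TJ)(x)\le J(x)\ \forall x\in X\}$. Standing assumption: for every $J\in\mathcal{E}^+(X)$ and every $x\in X$, the infimum defining $(TJ)(x)$ is attained. *)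

From mathcomp Require Import all_boot all_order all_algebra.
From mathcomp Require Import all_classical all_reals all_analysis.
Set Implicit Arguments. Unset Strict Implicit. Unset Printing Implicit Defensive.
Import Order.TTheory GRing.Theory Num.Theory.
Local Open Scope classical_set_scope.
Local Open Scope ereal_scope.

Section DP.
Context {R : realType} {X U : Type}.

Definition bellman (Uc : X -> set U) (f : X -> U -> X) (g : X -> U -> \bar R)
  (J : X -> \bar R) : X -> \bar R :=
  fun x => ereal_inf [set g x u + J (f x u) | u in Uc x].

Definition in_D (Uc : X -> set U) (f : X -> U -> X) (g : X -> U -> \bar R)
  (J : X -> \bar R) : Prop :=
  (forall x, 0 <= J x) /\ (forall x, bellman Uc f g J x <= J x).

Fixpoint traj (f : X -> U -> X) (x0 : X) (us : nat -> U) (k : nat) : X :=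
  match k with
  | 0 => x0
  | k.+1 => f (traj f x0 us k) (us k)
  end.

Definition feasible (Uc : X -> set U) (f : X -> U -> X) (x0 : X) (us : nat -> U)
  (l : nat) : Prop :=
  forall k, (k < l)%N -> Uc (traj f x0 us k) (us k).

Definition stage_cost (f : X -> U -> X) (g : X -> U -> \bar R) (J : X -> \bar R)
  (x0 : X) (us : nat -> U) (l : nat) : \bar R :=
  \sum_(k < l) g (traj f x0 us k) (us k) + J (traj f x0 us l).

Definition lookahead_value (Uc : X -> set U) (f : X -> U -> X) (g : X -> U -> \bar R)
  (J : X -> \bar R) (l : nat) (x : X) : \bar R :=
  ereal_inf [set stage_cost f g J x us l | us in [set us | feasible Uc f x us l]].

Fixpoint ptraj (f : X -> U -> X) (mu : X -> U) (x0 : X) (k : nat) : X :=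
  match k with
  | 0 => x0
  | k.+1 => let y := ptraj f mu x0 k in f y (mu y)
  end.

Definition policy_cost (f : X -> U -> X) (g : X -> U -> \bar R) (mu : X -> U)
  (x0 : X) : \bar R :=
  \sum_(0 <= k <oo) g (ptraj f mu x0 k) (mu (ptraj f mu x0 k)).

End DP.

(* If every J_i is in the region of decreasing, appending the control that attains
   (T J_i)(x_l) to an l-step sequence shows that the (l+1)-step lookahead value is at
   most the l-step cost with terminal cost J_i.  Applied to the tail of the optimal
   sequence chosen by the parallel rollout, this gives the one-step decrease
   g(x, mu x) + J~(f(x, mu x)) <= J~(x) of J~ = min_i T^{l_i} J_i along mu.  Summing
   the decrease over the closed-loop trajectory bounds every partial sum of the cost of
   mu by J~(x), since J~ >= 0. *)
From mathcomp Require Import all_boot all_order all_algebra.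
From mathcomp Require Import all_classical all_reals all_analysis.
Import Order.TTheory GRing.Theory Num.Theory.
Local Open Scope classical_set_scope.
Local Open Scope ereal_scope.

Section Trajectories.
Context {X U : Type} (f : X -> U -> X).

Lemma traj_eq x (us vs : nat -> U) n :
  (forall k, (k < n)%N -> us k = vs k) ->
  forall k, (k <= n)%N -> traj f x us k = traj f x vs k.
Proof.
move=> eq_uv; elim=> [|k IHk] //= ltkn.
by rewrite IHk ?eq_uv // ltnW.
Qed.

Lemma traj_shift x (us : nat -> U) k :
  traj f (f x (us 0%N)) (fun j => us j.+1) k = traj f x us k.+1.
Proof. by elim: k => [|k IHk] //=; rewrite IHk. Qed.

Lemma ptraj_shift (mu : X -> U) x k :
  ptraj f mu (f x (mu x)) k = ptraj f mu x k.+1.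
Proof. by elim: k => [|k IHk] //=; rewrite IHk. Qed.

End Trajectories.

Section PolicyCost.
Context {R : realType} {X U : Type} (f : X -> U -> X) (g : X -> U -> \bar R).
Variables (mu : X -> U) (W : X -> \bar R).
Hypothesis g_mu_ge0 : forall x, 0 <= g x (mu x).
Hypothesis W_decrease : forall x, g x (mu x) + W (f x (mu x)) <= W x.

Lemma policy_partial_cost_le n x :
  \sum_(k < n) g (ptraj f mu x k) (mu (ptraj f mu x k)) + W (ptraj f mu x n) <= W x.
Proof.
elim: n x => [|n IHn] x; first by rewrite big_ord0 add0e.
apply: le_trans (W_decrease x); rewrite big_ord_recl -addeA; apply: leeD2l.
apply: le_trans (IHn (f x (mu x))); rewrite ptraj_shift.
by under [X in X + _ <= _]eq_bigr do rewrite -ptraj_shift.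
Qed.

Lemma policy_cost_le (W_ge0 : forall x, 0 <= W x) x : policy_cost f g mu x <= W x.
Proof.
apply: lime_le; first exact: is_cvg_nneseries.
apply: nearW => n /=; rewrite big_mkord.
by apply: le_trans (policy_partial_cost_le n x); exact: leeDl.
Qed.

End PolicyCost.

Section Lookahead.
Context {R : realType} {X U : Type}.
Variables (Uc : X -> set U) (f : X -> U -> X) (g : X -> U -> \bar R).
Hypothesis g_ge0 : forall x u, Uc x u -> 0 <= g x u.

Lemma feasible_shift [x us m] :
  feasible Uc f x us m.+1 -> feasible Uc f (f x (us 0%N)) (fun k => us k.+1) m.
Proof. by move=> us_feas k ltkm; rewrite traj_shift; exact: us_feas. Qed.

Lemma stage_costS J x us m :
  stage_cost f g J x us m.+1 =
  g x (us 0%N) + stage_cost f g J (f x (us 0%N)) (fun k => us k.+1) m.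
Proof.
rewrite /stage_cost big_ord_recl addeA traj_shift; congr (_ + _ + _).
by apply: eq_bigr => k _; rewrite traj_shift.
Qed.

Lemma lookahead_value_ge0 J l x :
  (forall y, 0 <= J y) -> 0 <= lookahead_value Uc f g J l x.
Proof.
move=> J_ge0; apply/ereal_infP => _ [us us_feas <-].
apply: adde_ge0 => //; rewrite big_seq_cond.
by apply: sume_ge0 => k _; exact/g_ge0/us_feas.
Qed.

Hypothesis attain : forall J : X -> \bar R, (forall x, 0 <= J x) ->
  forall x, exists2 u, Uc x u & g x u + J (f x u) = bellman Uc f g J x.

Lemma lookahead_valueS_le [J m x vs] : in_D Uc f g J -> feasible Uc f x vs m ->
  lookahead_value Uc f g J m.+1 x <= stage_cost f g J x vs m.
Proof.
move=> [J_ge0 TJ_le] vs_feas; set z := traj f x vs m.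
have [u Uzu gJu] := attain J J_ge0 z.
pose ws k := if (k < m)%N then vs k else u.
have traj_ws k : (k <= m)%N -> traj f x ws k = traj f x vs k.
  by apply: traj_eq => j ltjm; rewrite /ws ltjm.
have ws_feas : feasible Uc f x ws m.+1.
  move=> k; rewrite ltnS leq_eqVlt => /predU1P[->|ltkm].
    by rewrite traj_ws // /ws ltnn.
  by rewrite traj_ws 1?ltnW // /ws ltkm; exact: vs_feas.
apply: le_trans (_ : stage_cost f g J x ws m.+1 <= _).
  by apply: ereal_inf_lbound; exists ws.
rewrite /stage_cost big_ord_recr /= -addeA.
have -> : \sum_(k < m) g (traj f x ws k) (ws k) = \sum_(k < m) g (traj f x vs k) (vs k).
  by apply: eq_bigr => k _; rewrite /ws ltn_ord traj_ws // ltnW.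
apply: leeD2l; rewrite traj_ws // /ws ltnn -/z gJu; exact: TJ_le.
Qed.

Lemma lookahead_value_shift_le [J m x us] :
  in_D Uc f g J -> feasible Uc f x us m.+1 ->
  g x (us 0%N) + lookahead_value Uc f g J m.+1 (f x (us 0%N)) <=
  stage_cost f g J x us m.+1.
Proof.
move=> J_in_D us_feas; rewrite stage_costS; apply: leeD2l.
exact: lookahead_valueS_le J_in_D (feasible_shift us_feas).
Qed.

Section ParallelRollout.
Variables (p : nat) (J : 'I_p -> X -> \bar R) (l : 'I_p -> nat).
Hypothesis J_in_D : forall i, in_D Uc f g (J i).
Hypothesis l_gt0 : forall i, (0 < l i)%N.

Definition rollout_value x : \bar R :=
  \big[mine/+oo]_(i < p) lookahead_value Uc f g (J i) (l i) x.

Lemma rollout_value_ge0 x : 0 <= rollout_value x.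
Proof.
apply: le_bigmin => // i _; apply: lookahead_value_ge0.
by case: (J_in_D i).
Qed.

Lemma rollout_value_decrease x i us :
  (forall j, lookahead_value Uc f g (J i) (l i) x <=
             lookahead_value Uc f g (J j) (l j) x) ->
  feasible Uc f x us (l i) ->
  stage_cost f g (J i) x us (l i) = lookahead_value Uc f g (J i) (l i) x ->
  g x (us 0%N) + rollout_value (f x (us 0%N)) <= rollout_value x.
Proof.
move=> i_min us_feas us_opt.
have -> : rollout_value x = lookahead_value Uc f g (J i) (l i) x.
  apply/le_anti; rewrite /rollout_value bigmin_le /=.
  by apply: le_bigmin => [|j _]; [exact: leey | exact: i_min].
move: us_feas; rewrite -us_opt -(prednK (l_gt0 i)) => us_feas.
apply: le_trans (lookahead_value_shift_le (J_in_D i) us_feas).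
by rewrite prednK //; apply: leeD2l; exact: bigmin_le.
Qed.

End ParallelRollout.

End Lookahead.

Theorem proposition4 (R : realType) (X U : Type) (Uc : X -> set U)
  (f : X -> U -> X) (g : X -> U -> \bar R)
  (HU : forall x, Uc x !=set0)
  (Hg : forall x u, Uc x u -> 0 <= g x u)
  (Hattain : forall J : X -> \bar R, (forall x, 0 <= J x) ->
     forall x, exists2 u, Uc x u & g x u + J (f x u) = bellman Uc f g J x)
  (p : nat) (Hp : (0 < p)%N)
  (J : 'I_p -> X -> \bar R) (HJ : forall i, in_D Uc f g (J i))
  (l : 'I_p -> nat) (Hl : forall i, (0 < l i)%N)
  (mu : X -> U)
  (Hmu : forall x, exists i : 'I_p,
     (forall j : 'I_p, lookahead_value Uc f g (J i) (l i) x
                        <= lookahead_value Uc f g (J j) (l j) x) /\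
     exists us : nat -> U,
       [/\ feasible Uc f x us (l i),
           stage_cost f g (J i) x us (l i) = lookahead_value Uc f g (J i) (l i) x
         & us 0%N = mu x]) :
  forall x : X,
    policy_cost f g mu x <= \big[mine/+oo]_(i < p) lookahead_value Uc f g (J i) (l i) x.
Proof.
have mu_admissible y : Uc y (mu y).
  by have [i [_ [us [us_feas _ <-]]]] := Hmu y; exact: us_feas 0%N (Hl i).
move=> x; apply: (policy_cost_le f g mu (rollout_value Uc f g p J l)) => y.
- exact/Hg/mu_admissible.
- have [i [i_min [us [us_feas us_opt <-]]]] := Hmu y.
  exact: rollout_value_decrease us_feas us_opt.
- exact: rollout_value_ge0.
Qed.
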